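(* In the setting below, assume $\|\nabla f_i(x)\|\le G_i$ for all $x$ and $i$, and $\psi$ satisfies the $\mu_\psi$-condition. Let $\gamma_k=\eta_k\prod_{\ell=2}^k(1+n\eta_{\ell-1}\mu_\psi)$ for $k\in[K]$. Then for any permutations $\sigma_1,\dots,\sigma_K$, $$F(x_{K+1})-F(x_* )\le\frac{\|x_*-x_1\|^2-\|x_*-x_{K+1}\|^2}{2n\sum_{k=1}^K\gamma_k}+3\bar G^2n\sum_{k=1}^K\frac{\gamma_k\eta_k}{\sum_{\ell=k}^K\gamma_\ell}.$$
   Context: Setting. Let $n,d\in\mathbb N$, let $f_1,\dots,f_n:\mathbb R^d\to\mathbb R$ be convex, $f=\frac1n\sum_{i=1}^nf_i$, let $\psi:\mathbb R^d\to\mathbb R\cup\{+\infty\}$ be proper, closed and convex, and $F=f+\psi$. For a convex function $g$, $\nabla g(x)$ denotes an element of $\partial g(x)$ (for each $f_i$ a fixed selection of subgradients, the same one used in the algorithm), and $B_g(x,y)=g(x)-g(y)-\langle\nabla g(y),x-y\rangle$. The $\mu_\psi$-condition: $\mu_\psi\ge0$ and $B_\psi(x,y)\ge\frac{\mu_\psi}{2}\|x-y\|^2$ for all $x,y$ with $\partial\psi(y)\neq\emptyset$ and every choice of $\nabla\psi(y)\in\partial\psi(y)$. Assume there is $x_*\in\mathbb R^d$ with $F(x_* )=\inf_{x}F(x)\in\mathbb R$. Proximal shuffling gradient method: given $x_1\in\mathrm{dom}\,\psi$, a number of epochs $K\ge2$ and stepsizes $\eta_k>0$, for $k=1,\dots,K$: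 choose a permutation $\sigma_k=(\sigma_k^1,\dots,\sigma_k^n)$ of $[n]=\{1,\dots,n\}$; set $x_k^1=x_k$ and $x_k^{i+1}=x_k^i-\eta_k\nabla f_{\sigma_k^i}(x_k^i)$ for $i=1,\dots,n$; set $x_{k+1}=\arg\min_{x\in\mathbb R^d}\{n\psi(x)+\frac{1}{2\eta_k}\|x-x_k^{n+1}\|^2\}$. Lipschitz condition: constants $G_i>0$ with $\|\nabla f_i(x)\|\le G_i$ for all $x\in\mathbb R^d$, $i\in[n]$ (for every subgradient); $\bar G=\frac1n\sum_{i=1}^nG_i$. *)

From HB Require Import structures.
From mathcomp Require Import all_boot all_order all_algebra.
From mathcomp Require Import all_classical all_reals.
From mathcomp Require Import topology normedtype.
From mathcomp Require Import fingroup perm.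
Set Implicit Arguments. Unset Strict Implicit. Unset Printing Implicit Defensive.
Import Order.TTheory GRing.Theory Num.Theory.
Import numFieldNormedType.Exports.
Local Open Scope ring_scope.
Local Open Scope ereal_scope.
Local Open Scope classical_set_scope.

Section Defs.
Variable R : realType.
Variable d : nat.

Definition vec := 'rV[R]_d.

Definition dot (x y : vec) : R := (\sum_(j < d) x ord0 j * y ord0 j)%R.
Definition sqnorm (x : vec) : R := dot x x.
Definition enorm (x : vec) : R := Num.sqrt (sqnorm x).

Definition convex_fun (f : vec -> R) : Prop :=
  forall (x y : vec) (t : R), (0 <= t <= 1)%R ->
    (f (t *: x + (1 - t) *: y) <= t * f x + (1 - t) * f y)%R.

Definition subgrad (f : vec -> R) (x v : vec) : Prop :=
  forall y : vec, (f x + dot v (y - x) <= f y)%R.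

Definition proper_fun (psi : vec -> \bar R) : Prop :=
  (forall x, psi x != -oo) /\ (exists x, psi x \is a fin_num).

Definition convex_efun (psi : vec -> \bar R) : Prop :=
  forall (x y : vec) (t : R), (0 <= t <= 1)%R ->
    psi (t *: x + (1 - t) *: y)%R <= t%:E * psi x + (1 - t)%R%:E * psi y.

Definition closed_fun (psi : vec -> \bar R) : Prop :=
  forall a : R, closed ([set x | psi x <= a%:E] : set vec).

Definition esubgrad (psi : vec -> \bar R) (y v : vec) : Prop :=
  psi y \is a fin_num /\ forall x : vec, psi y + (dot v (x - y)%R)%:E <= psi x.

(* mu_psi-condition: B_psi(x,y) >= mu/2 ||x-y||^2 for every y with nonempty
   subdifferential and every choice of subgradient at y. *)
Definition mu_condition (psi : vec -> \bar R) (mu : R) : Prop :=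
  (0 <= mu)%R /\
  forall (x y v : vec), esubgrad psi y v ->
    psi y + (dot v (x - y) + mu / 2 * sqnorm (x - y))%:E <= psi x.

(* One epoch of inner shuffling-gradient steps, starting at x with step eta
   and permutation s: returns x^{n+1}, where
   x^{i+1} = x^i - eta * g_{s(i)}(x^i), i = 1..n (0-based indices here). *)
Definition epoch_end (n : nat) (g : 'I_n -> vec -> vec) (s : 'S_n)
    (eta : R) (x : vec) : vec :=
  foldl (fun y j => (y - eta *: g j y)%R) x [seq s i | i <- enum 'I_n].

End Defs.

(* Each epoch runs n incremental subgradient steps and then a proximal step.  Since
   the subgradients are bounded, an incremental pass moves at most eta * sum_i G_i, so
   it behaves like one full subgradient step evaluated at the new iterate.  Together
   with the optimality condition of the proximal step and the mu_psi-condition this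
   gives, for every z in dom psi, the one-epoch inequality
     (1 + n eta_k mu) |x_(k+1) - z|^2
        <= |x_k - z|^2 - 2 n eta_k (F x_(k+1) - F z) + 4 eta_k^2 (sum_i G_i)^2.
   Multiplied by prod_(l < k) (1 + n eta_l mu) it telescopes.  With z = x_* it bounds
   the gamma-weighted sum of the gaps h_k = F x_k - F x_*; with z = x_s it bounds each
   tail sum sum_(k >= s) gamma_k h_(k+1) by (sum_(k >= s) gamma_k) h_s plus an error.
   Comparing consecutive tail averages (a mediant inequality) turns these tail bounds
   into a bound on the last gap h_(K+1). *)

From HB Require Import structures.
From mathcomp Require Import all_boot all_order all_algebra.
From mathcomp Require Import all_classical all_reals.
From mathcomp Require Import topology normedtype.
From mathcomp Require Import fingroup perm.
From mathcomp Require Import ring lra.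
Import Order.TTheory GRing.Theory Num.Theory.
Set Implicit Arguments. Unset Strict Implicit. Unset Printing Implicit Defensive.
Local Open Scope ring_scope.

Section InnerProduct.
Variables (R : realType) (d : nat).
Implicit Types (a lam : R) (x y z p q : vec R d).

Lemma dotC x y : dot x y = dot y x.
Proof. by apply: eq_bigr => j _; rewrite mulrC. Qed.

Lemma dotDl x y z : dot (x + y) z = dot x z + dot y z.
Proof. by rewrite /dot -big_split; apply: eq_bigr => j _; rewrite mxE mulrDl. Qed.

Lemma dotNl x y : dot (- x) y = - dot x y.
Proof. by rewrite /dot -sumrN; apply: eq_bigr => j _; rewrite mxE mulNr. Qed.

Lemma dotZl a x y : dot (a *: x) y = a * dot x y.
Proof. by rewrite /dot mulr_sumr; apply: eq_bigr => j _; rewrite mxE mulrA. Qed.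

Lemma dotDr x y z : dot z (x + y) = dot z x + dot z y.
Proof. by rewrite dotC dotDl !(dotC z). Qed.

Lemma dotNr x y : dot x (- y) = - dot x y.
Proof. by rewrite dotC dotNl dotC. Qed.

Lemma dotZr a x y : dot x (a *: y) = a * dot x y.
Proof. by rewrite dotC dotZl dotC. Qed.

Lemma sqnorm_ge0 x : 0 <= sqnorm x.
Proof. by apply: sumr_ge0 => j _; rewrite -expr2 sqr_ge0. Qed.

Lemma sqnorm0 : sqnorm (0 : vec R d) = 0.
Proof. by rewrite /sqnorm /dot big1 // => j _; rewrite mxE mulr0. Qed.

Lemma sqnormD x y : sqnorm (x + y) = sqnorm x + 2 * dot x y + sqnorm y.
Proof. by rewrite /sqnorm dotDl !dotDr (dotC y x); ring. Qed.

Lemma sqnormZ a x : sqnorm (a *: x) = a ^+ 2 * sqnorm x.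
Proof. by rewrite /sqnorm dotZl dotZr mulrA expr2. Qed.

Lemma sqnormN x : sqnorm (- x) = sqnorm x.
Proof. by rewrite /sqnorm dotNl dotNr opprK. Qed.

Lemma sqnormB x y : sqnorm (x - y) = sqnorm x - 2 * dot x y + sqnorm y.
Proof. by rewrite sqnormD dotNr sqnormN mulrN. Qed.

Lemma sqnorm_sym x y : sqnorm (x - y) = sqnorm (y - x).
Proof. by rewrite -sqnormN opprB. Qed.

Lemma sqnorm_le_sqr x (G : R) : enorm x <= G -> sqnorm x <= G ^+ 2.
Proof.
move=> le_xG; rewrite -(sqr_sqrtr (sqnorm_ge0 x)).
by rewrite lerXn2r ?nnegrE ?sqrtr_ge0 // (le_trans (sqrtr_ge0 _) le_xG).
Qed.

Lemma young_dot lam p q : 0 < lam ->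
  2 * dot p q <= lam * sqnorm p + sqnorm q / lam.
Proof.
move=> lam_gt0; have := sqnorm_ge0 (lam *: p - q).
rewrite sqnormB sqnormZ dotZl => sq_ge0.
rewrite -subr_ge0 (_ : _ - _ =
  (lam ^+ 2 * sqnorm p - 2 * (lam * dot p q) + sqnorm q) / lam).
  by rewrite divr_ge0 // ltW.
by field; rewrite gt_eqF.
Qed.

Lemma dot_le_mul (P Q : R) p q : 0 < P -> 0 < Q ->
  sqnorm p <= P ^+ 2 -> sqnorm q <= Q ^+ 2 -> dot p q <= P * Q.
Proof.
move=> P_gt0 Q_gt0 le_pP le_qQ.
have QP_gt0 : 0 < Q / P by rewrite divr_gt0.
have := young_dot p q QP_gt0.
have p_term : Q / P * sqnorm p <= Q * P.
  have -> : Q * P = Q / P * P ^+ 2 by field; rewrite gt_eqF.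
  by apply: ler_wpM2l (ltW QP_gt0) _ _ le_pP.
have q_term : sqnorm q / (Q / P) <= Q * P.
  have -> : Q * P = Q ^+ 2 / (Q / P) by field; rewrite !gt_eqF.
  by rewrite ler_pM2r ?invr_gt0.
lra.
Qed.

End InnerProduct.

Lemma subgrad_step_sqdist_le (R : realType) d (f : vec R d -> R) (eta Gu : R)
    (u v y w z : vec R d) :
  0 <= eta -> subgrad f y u -> subgrad f w v -> sqnorm u <= Gu ^+ 2 ->
  sqnorm (y - eta *: u - z)
    <= sqnorm (y - z) - 2 * eta * (f w - f z + dot v (y - w)) + eta ^+ 2 * Gu ^+ 2.
Proof.
move=> eta_ge0 sub_yu sub_wv le_uG.
have lin_y : f y - f z <= dot u (y - z).
  by have := sub_yu z; rewrite -opprB dotNr; lra.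
have lin_w : f w + dot v (y - w) <= f y := sub_wv y.
rewrite (addrAC y) (sqnormB (y - z)) sqnormZ dotZr (dotC (y - z)).
have : eta * (f w - f z + dot v (y - w)) <= eta * dot u (y - z).
  by apply: ler_wpM2l => //; lra.
have : eta ^+ 2 * sqnorm u <= eta ^+ 2 * Gu ^+ 2 by apply: ler_wpM2l; rewrite ?sqr_ge0.
lra.
Qed.

Definition incremental_pass (R : realType) d (I : Type) (g : I -> vec R d -> vec R d)
    (eta : R) (l : seq I) (y : vec R d) : vec R d :=
  foldl (fun y j => y - eta *: g j y) y l.

Section IncrementalPass.
Variables (R : realType) (d : nat) (I : Type).
Variables (fi : I -> vec R d -> R) (g : I -> vec R d -> vec R d) (G : I -> R).
Variable eta : R.
Hypotheses (eta_ge0 : 0 <= eta) (G_gt0 : forall i, 0 < G i).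
Hypothesis g_bound : forall i y, sqnorm (g i y) <= G i ^+ 2.
Hypothesis g_subgrad : forall i y, subgrad (fi i) y (g i y).

Lemma dot_incremental_pass_le (P : R) (p : vec R d) (l : seq I) (y : vec R d) :
  0 < P -> sqnorm p <= P ^+ 2 ->
  dot p (y - incremental_pass g eta l y) <= eta * P * \sum_(j <- l) G j.
Proof.
move=> P_gt0 le_pP; elim: l y => [|a l IH] y /=.
  by rewrite big_nil subrr dotC -(scale0r 0) dotZl !mul0r mulr0.
rewrite big_cons /incremental_pass /= -/(incremental_pass g eta l _).
set y' := y - eta *: g a y.
have -> : y - incremental_pass g eta l y'
    = eta *: g a y + (y' - incremental_pass g eta l y').
  by rewrite /y' addrA (addrC (eta *: g a y)) subrK.
rewrite dotDr dotZr mulrDr.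
have : eta * dot p (g a y) <= eta * (P * G a).
  by apply: ler_wpM2l => //; apply: dot_le_mul.
have := IH y'; lra.
Qed.

Lemma incremental_pass_descent (l : seq I) (y z w : vec R d) :
  sqnorm (incremental_pass g eta l y - z)
    <= sqnorm (y - z)
       - 2 * eta * \sum_(a <- l)
           (fi a w - fi a z + dot (g a w) (incremental_pass g eta l y - w))
       + 3 * eta ^+ 2 * (\sum_(a <- l) G a) ^+ 2.
Proof.
elim: l y => [|a l IH] y.
  by rewrite !big_nil /incremental_pass /=; lra.
(* Compare the step at y with the subgradient of f_a at the common point w; the
   mismatch is paid for by the drift of the pass. *)
have := @dot_incremental_pass_le (G a) (- g a w) (a :: l) y (G_gt0 a).
rewrite sqnormN g_bound dotNl => /(_ isT) drift.
rewrite !big_cons /incremental_pass /= -!/(incremental_pass g eta l _) in drift *.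
set y' := y - eta *: g a y in drift *.
set e := incremental_pass g eta l y' in drift *.
set T := \sum_(j <- l) G j in drift *.
have T_ge0 : 0 <= T by apply: sumr_ge0 => j _; apply: ltW.
have step :=
  subgrad_step_sqdist_le z eta_ge0 (g_subgrad a y) (g_subgrad a w) (g_bound a y).
rewrite (_ : y - w = (e - w) + (y - e)) ?(dotDr (e - w)) in step; last first.
  by rewrite [RHS]addrC addrA subrK.
rewrite -/y' in step.
have := IH y'; rewrite -/e -/T.
have : 0 <= eta * (eta * G a * T) by rewrite !mulr_ge0 // ltW.
have : - (eta * dot (g a w) (y - e)) <= eta * (eta * G a * (G a + T)).
  by rewrite -mulrN; apply: ler_wpM2l.
lra.
Qed.

End IncrementalPass.

Lemma affine_ge0_at0 (R : realFieldType) (A B : R) :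
  (forall t, 0 < t <= 1 -> 0 <= A + t * B) -> 0 <= A.
Proof.
move=> ge0_on_oc; rewrite leNgt; apply/negP => A_lt0.
have den_gt0 : 0 < - A + `|B| by rewrite ltr_pwDl ?normr_ge0 ?oppr_gt0.
set t := - A / (- A + `|B|).
have t_gt0 : 0 < t by rewrite divr_gt0 ?oppr_gt0.
have t_le1 : t <= 1 by rewrite ler_pdivrMr // mul1r lerDl.
have := ge0_on_oc t (introT andP (conj t_gt0 t_le1)).
have : t * B <= t * `|B| by apply: ler_wpM2l (ltW t_gt0) _ _ (ler_norm B).
have : A + t * `|B| = - (A * A) / (- A + `|B|) by rewrite /t; field; rewrite gt_eqF.
have : 0 < A * A / (- A + `|B|) by rewrite divr_gt0 // nmulr_rgt0.
rewrite mulNr; lra.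
Qed.

Section Prox.
Variables (R : realType) (d : nat).
Local Open Scope ereal_scope.
Implicit Types (psi : vec R d -> \bar R) (N eta : R) (c w : vec R d).

Definition prox_point psi N eta c w :=
  forall y, N%:E * psi w + (sqnorm (w - c) / (2 * eta))%:E
            <= N%:E * psi y + (sqnorm (y - c) / (2 * eta))%:E.

Lemma prox_point_fin_num psi N eta c w (y : vec R d) :
  (0 < N)%R -> psi w != -oo -> psi y \is a fin_num ->
  prox_point psi N eta c w -> psi w \is a fin_num.
Proof.
move=> N_gt0 psiw_ninfty psiy_fin prox_w; rewrite fin_numE psiw_ninfty /=.
apply/negP => /eqP psiw_infty; have := prox_w y.
rewrite psiw_infty -(fineK psiy_fin) mulry gtr0_sg // mul1e addye //.
Qed.

(* The optimality condition of the prox step, obtained by comparing w with the points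
   w + t (x - w) and letting t tend to 0. *)
Lemma prox_point_esubgrad psi N eta c w :
  (0 < N)%R -> (0 < eta)%R -> (forall x, psi x != -oo) -> convex_efun psi ->
  psi w \is a fin_num -> prox_point psi N eta c w ->
  esubgrad psi w ((N * eta)^-1 *: (c - w)).
Proof.
move=> N_gt0 eta_gt0 psi_ninfty psi_convex psiw_fin prox_w; split=> // x.
case Epsix: (psi x) => [r| |]; [|exact: leey|by have := psi_ninfty x; rewrite Epsix].
rewrite -(fineK psiw_fin) -EFinD lee_fin; set pw := fine (psi w).
set D := dot (w - c)%R (x - w)%R; set Q := sqnorm (x - w)%R.
suff : (0 <= N * (r - pw) + D / eta)%R.
  have -> : (N * (r - pw) + D / eta = N * (r - pw + (N * eta)^-1 * D))%R.
    by field; rewrite !gt_eqF.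
  by rewrite pmulr_rge0 // dotZl -(opprB w c) dotNl -/D; lra.
apply: (affine_ge0_at0 (B := (Q / (2 * eta))%R)) => t /andP[t_gt0 t_le1].
have convex_t := psi_convex x w t (introT andP (conj (ltW t_gt0) t_le1)).
rewrite Epsix -(fineK psiw_fin) -!EFinM -EFinD -/pw in convex_t.
have := prox_w (t *: x + (1 - t) *: w)%R.
rewrite (_ : t *: x + (1 - t) *: w - c = (w - c) + t *: (x - w))%R; last first.
  by apply/rowP => j; rewrite !mxE; ring.
rewrite (sqnormD (w - c)%R) sqnormZ dotZr -/D -/Q -(fineK psiw_fin) -/pw => prox_t.
have {prox_t convex_t} : ((N * pw + sqnorm (w - c) / (2 * eta))%:E
    <= (N * (t * r + (1 - t) * pw)
        + (sqnorm (w - c) + 2 * (t * D) + t ^+ 2 * Q) / (2 * eta))%:E).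
  apply: le_trans prox_t _; rewrite EFinD leeD2r // EFinM.
  by apply: lee_wpmul2l; rewrite // lee_fin ltW.
rewrite lee_fin => prox_t.
rewrite -(pmulr_rge0 _ t_gt0).
have -> : (t * (N * (r - pw) + D / eta + t * (Q / (2 * eta)))
    = N * (t * r + (1 - t) * pw) + (sqnorm (w - c) + 2 * (t * D) + t ^+ 2 * Q) / (2 * eta)
      - (N * pw + sqnorm (w - c) / (2 * eta)))%R.
  by field; rewrite gt_eqF.
by rewrite subr_ge0.
Qed.

End Prox.

Lemma young_dot_sum (R : realType) d (I : finType) (u : I -> vec R d) (G : I -> R)
    (eta : R) (v : vec R d) :
  (forall i, 0 < G i) -> 0 < \sum_i G i -> (forall i, sqnorm (u i) <= G i ^+ 2) ->
  - (2 * eta * \sum_i dot (u i) v) <= eta ^+ 2 * (\sum_i G i) ^+ 2 + sqnorm v.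
Proof.
move=> G_gt0; set T := \sum_i G i => T_gt0 u_bound.
have -> : eta ^+ 2 * T ^+ 2 + sqnorm v
    = \sum_i (eta ^+ 2 * T * G i + sqnorm v * (G i / T)).
  by rewrite big_split /= -!mulr_sumr -mulr_suml -/T; field; rewrite gt_eqF.
rewrite mulr_sumr -sumrN; apply: ler_sum => i _.
have lam_gt0 : 0 < T / G i by rewrite divr_gt0.
have := young_dot (- (eta *: u i)) v lam_gt0.
rewrite dotNl dotZl sqnormN sqnormZ invf_div => young_i.
have : T / G i * (eta ^+ 2 * sqnorm (u i)) <= eta ^+ 2 * T * G i.
  rewrite (_ : eta ^+ 2 * T * G i = T / G i * (eta ^+ 2 * G i ^+ 2)); last first.
    by field; rewrite gt_eqF.
  apply: ler_wpM2l; first by rewrite divr_ge0 ?ltW.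
  by apply: ler_wpM2l; rewrite ?sqr_ge0.
lra.
Qed.

Lemma big_perm_enum (R : Type) (idx : R) (op : Monoid.com_law idx) (T : finType)
    (s : {perm T}) (F : T -> R) :
  \big[op/idx]_(a <- [seq s i | i <- enum T]) F a = \big[op/idx]_i F i.
Proof.
rewrite big_map big_enum [RHS](reindex_inj (@perm_inj _ s)) /=.
by apply: eq_bigl => i.
Qed.

Lemma epoch_endE (R : realType) n d (g : 'I_n -> vec R d -> vec R d) (s : 'S_n)
    (eta : R) (x : vec R d) :
  epoch_end g s eta x = incremental_pass g eta [seq s i | i <- enum 'I_n] x.
Proof. by []. Qed.

Section Epoch.
Variables (R : realType) (n d : nat).
Variables (fi : 'I_n -> vec R d -> R) (g : 'I_n -> vec R d -> vec R d) (G : 'I_n -> R).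
Variables (psi : vec R d -> \bar R) (mu : R).
Hypotheses (n_gt0 : (0 < n)%N) (G_gt0 : forall i, 0 < G i).
Hypothesis g_bound : forall i y, sqnorm (g i y) <= G i ^+ 2.
Hypothesis g_subgrad : forall i y, subgrad (fi i) y (g i y).
Hypotheses (psi_ninfty : forall x, psi x != -oo%E) (psi_convex : convex_efun psi).
Hypothesis psi_mu : mu_condition psi mu.

(* F as a real number; [fine] returns 0 off dom psi, so Fr is only used on dom psi. *)
Let Fr (y : vec R d) := n%:R^-1 * \sum_i fi i y + fine (psi y).

Lemma epoch_descent (eta : R) (s : 'S_n) (xk w z : vec R d) :
  0 < eta -> psi w \is a fin_num -> psi z \is a fin_num ->
  prox_point psi n%:R eta (epoch_end g s eta xk) w ->
  (1 + n%:R * eta * mu) * sqnorm (w - z)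
    <= sqnorm (xk - z) - 2 * eta * n%:R * (Fr w - Fr z)
       + 4 * eta ^+ 2 * (\sum_i G i) ^+ 2.
Proof.
move=> eta_gt0 psiw_fin psiz_fin prox_w.
have N_gt0 : 0 < n%:R :> R by rewrite ltr0n.
rewrite epoch_endE in prox_w; set c := incremental_pass _ _ _ xk in prox_w.
set T := \sum_i G i.
have T_gt0 : 0 < T.
  rewrite /T (bigD1 (Ordinal n_gt0)) //= ltr_pwDl ?G_gt0 //.
  by rewrite sumr_ge0 // => i _; apply: ltW.
have inner := incremental_pass_descent (ltW eta_gt0) G_gt0 g_bound g_subgrad
  [seq s i | i <- enum 'I_n] xk z w.
rewrite -/c !big_perm_enum big_split /= -/T in inner.
have young := young_dot_sum eta (c - w) G_gt0 T_gt0 (fun i => g_bound i w).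
have subgrad_w :=
  prox_point_esubgrad N_gt0 eta_gt0 psi_ninfty psi_convex psiw_fin prox_w.
have strong := psi_mu.2 z w _ subgrad_w.
rewrite -(fineK psiw_fin) -(fineK psiz_fin) -EFinD lee_fin dotZl in strong.
set pw := fine (psi w) in strong *; set pz := fine (psi z) in strong *.
have strong' : 2 * dot (c - w) (z - w) + n%:R * eta * mu * sqnorm (w - z)
    <= 2 * n%:R * eta * (pz - pw).
  rewrite sqnorm_sym in strong.
  have := ler_wpM2l (ltW (mulr_gt0 N_gt0 eta_gt0)) strong.
  rewrite !mulrDr mulrA mulfV ?mul1r ?gt_eqF ?mulr_gt0 //; lra.
have split_dist : sqnorm (w - z)
    = sqnorm (c - z) - sqnorm (c - w) + 2 * dot (c - w) (z - w).
  have -> : c - z = (c - w) - (z - w) by rewrite opprB addrA subrK.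
  by rewrite (sqnormB (c - w)) (sqnorm_sym z w); lra.
have -> : 2 * eta * n%:R * (Fr w - Fr z)
    = 2 * eta * (\sum_i (fi i w - fi i z) + n%:R * (pw - pz)).
  by rewrite /Fr -/pw -/pz sumrB; field; rewrite gt_eqF.
rewrite -/T in young; lra.
Qed.

End Epoch.

Lemma ler_sum_telescope (R : realDomainType) (a b : nat -> R) (m p : nat) :
  (m <= p)%N -> (forall k, (m <= k < p)%N -> a k.+1 <= a k - b k) ->
  a p <= a m - \sum_(m <= k < p) b k.
Proof.
move=> le_mp step.
have : \sum_(m <= k < p) (a k.+1 - a k) <= \sum_(m <= k < p) - b k.
  rewrite big_nat_cond [X in _ <= X]big_nat_cond.
  by apply: ler_sum => k /andP[/step le_k _]; lra.
rewrite telescope_sumr // sumrN; lra.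
Qed.

Lemma le_mediant (R : realFieldType) (a b h u : R) :
  0 <= a -> 0 < b -> u <= b * h -> u / b <= (a * h + u) / (a + b).
Proof.
move=> a_ge0 b_gt0 le_u; have ab_gt0 : 0 < a + b by rewrite ltr_wpDl.
rewrite ler_pdivrMr // mulrAC ler_pdivlMr // mulrDr mulrDl lerD2r.
nra.
Qed.

Section LastIterate.
Variables (R : realFieldType) (K : nat) (gam h eps : nat -> R) (B : R).
Hypothesis gam_gt0 : forall k, (1 <= k <= K)%N -> 0 < gam k.
Let v s := \sum_(s <= k < K.+1) gam k.
Let S s := \sum_(s <= k < K.+1) gam k * h k.+1.
Let e s := \sum_(s <= k < K.+1) eps k.
Hypothesis S_le : forall s, (2 <= s <= K)%N -> S s <= v s * h s + e s.
Hypothesis S1_le : S 1 <= B + e 1.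

Lemma last_iterate_le : (0 < K)%N ->
  h K.+1 <= B / v 1 + \sum_(1 <= k < K.+1) eps k / v k.
Proof.
move=> K_gt0; have K_range : (1 <= K <= K)%N by rewrite K_gt0 leqnn.
have v_gt0 s : (1 <= s <= K)%N -> 0 < v s.
  move=> /andP[s_ge1 s_leK]; rewrite /v big_ltn ?ltnS // ltr_pwDl ?gam_gt0 ?s_ge1 //.
  rewrite big_nat_cond sumr_ge0 // => k /andP[/andP[lt_sk lt_kK] _].
  by rewrite ltW ?gam_gt0 // (leq_trans s_ge1 (ltnW lt_sk)) -ltnS.
have split s : (s < K.+1)%N ->
    [/\ v s = gam s + v s.+1, S s = gam s * h s.+1 + S s.+1 & e s = eps s + e s.+1].
  by move=> lt_sK; rewrite /v /S /e !(big_ltn lt_sK).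
(* The tail average (S s - e s) / v s, plus the errors still to come, can only
   decrease from s to s + 1 by the mediant inequality; at s = K it is h K.+1. *)
pose Phi s := (S s - e s) / v s + \sum_(s <= k < K.+1) eps k / v k.
have Phi_K : Phi K = h K.+1.
  by rewrite /Phi /S /e /v !big_nat1; field; rewrite gt_eqF ?gam_gt0.
have Phi_step s : (1 <= s < K)%N -> Phi s.+1 <= Phi s.
  move=> /andP[s_ge1 s_ltK]; have s_ltK1 : (s < K.+1)%N by rewrite ltnW.
  have s_range : (1 <= s <= K)%N by rewrite s_ge1 ltnW.
  have gs_ge0 : 0 <= gam s := ltW (gam_gt0 s_range).
  have vs1_gt0 : 0 < v s.+1 by rewrite v_gt0.
  have [vs Ss es] := split s s_ltK1.
  rewrite /Phi (big_ltn s_ltK1) vs Ss es addrA lerD2r.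
  rewrite (_ : (gam s * h s.+1 + S s.+1 - (eps s + e s.+1)) / (gam s + v s.+1)
      + eps s / (gam s + v s.+1)
    = (gam s * h s.+1 + (S s.+1 - e s.+1)) / (gam s + v s.+1)); last first.
    by field; rewrite gt_eqF // ltr_wpDl.
  by apply: le_mediant => //; rewrite lerBlDr; apply: S_le; rewrite ltnS s_ge1.
have Phi_le1 s : (1 <= s <= K)%N -> Phi s <= Phi 1.
  elim: s => [//|[|s] IH] /andP[_ s_leK] //.
  exact: le_trans (Phi_step s.+1 s_leK) (IH (ltnW s_leK)).
rewrite -Phi_K; apply: le_trans (Phi_le1 K K_range) _.
rewrite /Phi lerD2r ler_pM2r ?invr_gt0 ?v_gt0 //.
by rewrite lerBlDr.
Qed.

End LastIterate.

Section ProximalShuffling.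
Variables (R : realType) (n d : nat).
Variables (fi : 'I_n -> vec R d -> R) (g : 'I_n -> vec R d -> vec R d) (G : 'I_n -> R).
Variables (psi : vec R d -> \bar R) (mu : R) (xstar : vec R d).
Variables (K : nat) (eta : nat -> R) (sigma : nat -> 'S_n) (x : nat -> vec R d).
Hypotheses (n_gt0 : (0 < n)%N) (G_gt0 : forall i, 0 < G i).
Hypothesis g_bound : forall i y, sqnorm (g i y) <= G i ^+ 2.
Hypothesis g_subgrad : forall i y, subgrad (fi i) y (g i y).
Hypotheses (psi_ninfty : forall y, psi y != -oo%E) (psi_convex : convex_efun psi).
Hypothesis psi_mu : mu_condition psi mu.
Hypotheses (xstar_fin : psi xstar \is a fin_num) (x1_fin : psi (x 1%N) \is a fin_num).
Hypothesis eta_gt0 : forall k, (1 <= k <= K)%N -> 0 < eta k.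
Hypothesis x_prox : forall k, (1 <= k <= K)%N ->
  prox_point psi n%:R (eta k) (epoch_end g (sigma k) (eta k) (x k)) (x k.+1).

Let Fr (y : vec R d) := n%:R^-1 * \sum_i fi i y + fine (psi y).
Let weight k := \prod_(2 <= l < k.+1) (1 + n%:R * eta l.-1 * mu).
Let gamma k := eta k * weight k.
Let T := \sum_i G i.

Let n_real_gt0 : 0 < n%:R :> R. Proof. by rewrite ltr0n. Qed.

Lemma iterate_fin_num k : (1 <= k <= K.+1)%N -> psi (x k) \is a fin_num.
Proof.
case: k => [//|[|k] /andP[_ lt_kK]]; first exact: x1_fin.
exact: prox_point_fin_num n_real_gt0 (psi_ninfty _) x1_fin (x_prox _).
Qed.

Lemma weight_ge1 k : (1 <= k <= K.+1)%N -> 1 <= weight k.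
Proof.
elim: k => [//|[|k] IH] /andP[_ le_kK]; first by rewrite /weight big_geq.
have k_range : (1 <= k.+1 <= K)%N by [].
rewrite /weight big_nat_recr //= -/(weight k.+1); apply: mulr_ege1.
  by apply: IH; rewrite /= ltnW.
by rewrite lerDl !mulr_ge0 ?ler0n ?psi_mu.1 // ltW ?eta_gt0.
Qed.

Lemma gamma_gt0 k : (1 <= k <= K)%N -> 0 < gamma k.
Proof.
move=> /andP[k_ge1 k_leK]; rewrite mulr_gt0 ?eta_gt0 ?k_ge1 //.
by rewrite (lt_le_trans ltr01) // weight_ge1 // k_ge1 ltnW.
Qed.

Lemma weighted_epoch_descent k z : (1 <= k <= K)%N -> psi z \is a fin_num ->
  weight k.+1 * sqnorm (x k.+1 - z)
    <= weight k * sqnorm (x k - z)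
       - (2 * n%:R * gamma k * (Fr (x k.+1) - Fr z) - 4 * (gamma k * eta k) * T ^+ 2).
Proof.
move=> k_range z_fin; case/andP: (k_range) => k_ge1 k_leK.
have xk1_fin : psi (x k.+1) \is a fin_num by apply: iterate_fin_num.
have := epoch_descent n_gt0 G_gt0 g_bound g_subgrad psi_ninfty psi_convex psi_mu
  (eta_gt0 k_range) xk1_fin z_fin (x_prox k_range).
have weight_ge0 : 0 <= weight k.
  by rewrite (le_trans ler01) // weight_ge1 // k_ge1 ltnW.
have weightS : weight k.+1 = weight k * (1 + n%:R * eta k * mu).
  by rewrite /weight big_nat_recr.
move=> /(ler_wpM2l weight_ge0); rewrite weightS /gamma -/T -/(Fr (x k.+1)) -/(Fr z).
lra.
Qed.

Lemma weighted_distance_le s z : (1 <= s <= K.+1)%N -> psi z \is a fin_num ->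
  weight K.+1 * sqnorm (x K.+1 - z)
    <= weight s * sqnorm (x s - z)
       - \sum_(s <= k < K.+1)
           (2 * n%:R * gamma k * (Fr (x k.+1) - Fr z) - 4 * (gamma k * eta k) * T ^+ 2).
Proof.
move=> /andP[s_ge1 s_leK] z_fin.
apply: (ler_sum_telescope (a := fun k => weight k * sqnorm (x k - z))) => //.
move=> k /andP[le_sk lt_kK].
by apply: weighted_epoch_descent => //; rewrite (leq_trans s_ge1 le_sk) -ltnS.
Qed.

Lemma last_iterate_real_bound : (0 < K)%N ->
  Fr (x K.+1) - Fr xstar
    <= (sqnorm (xstar - x 1%N) - sqnorm (xstar - x K.+1))
         / (2 * n%:R * \sum_(1 <= k < K.+1) gamma k)
       + 2 * T ^+ 2 / n%:R
         * \sum_(1 <= k < K.+1) (gamma k * eta k / \sum_(k <= l < K.+1) gamma l).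
Proof.
move=> K_gt0.
pose h k := Fr (x k) - Fr xstar.
pose eps k := 2 * (gamma k * eta k) * T ^+ 2 / n%:R.
have descent_sum s z : \sum_(s <= k < K.+1)
      (2 * n%:R * gamma k * (Fr (x k.+1) - Fr z) - 4 * (gamma k * eta k) * T ^+ 2)
    = 2 * n%:R * (\sum_(s <= k < K.+1) gamma k * h k.+1
        - (\sum_(s <= k < K.+1) gamma k) * (Fr z - Fr xstar)
        - \sum_(s <= k < K.+1) eps k).
  rewrite mulr_suml -!sumrB mulr_sumr; apply: eq_bigr => k _.
  by rewrite /h /eps; field; rewrite gt_eqF.
have weightK_ge1 : 1 <= weight K.+1 by apply: weight_ge1; rewrite /= leqnn.
apply: le_trans (last_iterate_le (h := h) (eps := eps)
  (B := (sqnorm (x 1%N - xstar) - sqnorm (x K.+1 - xstar)) / (2 * n%:R))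
  gamma_gt0 _ _ K_gt0) _ => [s /andP[s_ge2 s_leK]||].
- have s_range : (1 <= s <= K.+1)%N by rewrite (ltnW s_ge2) (leqW s_leK).
  have := weighted_distance_le s_range (iterate_fin_num s_range).
  rewrite subrr sqnorm0 mulr0 descent_sum.
  have : 0 <= weight K.+1 * sqnorm (x K.+1 - x s).
    by rewrite mulr_ge0 ?sqnorm_ge0 // (le_trans ler01).
  rewrite -/(h s); have := n_real_gt0; nra.
- have weight1 : weight 1 = 1 by rewrite /weight big_geq.
  have := @weighted_distance_le 1 xstar isT xstar_fin.
  rewrite descent_sum subrr mulr0 subr0 weight1 mul1r.
  have : sqnorm (x K.+1 - xstar) <= weight K.+1 * sqnorm (x K.+1 - xstar).
    by rewrite ler_peMl ?sqnorm_ge0.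
  have := n_real_gt0.
  move=> ? ? ?; rewrite -lerBlDr ler_pdivlMr ?mulr_gt0 //; lra.
apply: lerD; rewrite le_eqVlt; apply/predU1P; left.
  by rewrite (sqnorm_sym (x 1%N)) (sqnorm_sym (x K.+1)) !invfM; ring.
by rewrite mulr_sumr; apply: eq_bigr => k _; rewrite /eps; ring.
Qed.

Lemma tail_weighted_sum_ge0 :
  0 <= \sum_(1 <= k < K.+1) (gamma k * eta k / \sum_(k <= l < K.+1) gamma l).
Proof.
rewrite big_nat_cond sumr_ge0 // => k /andP[/andP[k_ge1 k_leK] _].
have k_range : (1 <= k <= K)%N by rewrite k_ge1.
apply: divr_ge0; first by apply: mulr_ge0; apply: ltW; [exact: gamma_gt0|exact: eta_gt0].
rewrite big_nat_cond; apply: sumr_ge0 => l /andP[/andP[k_le_l l_leK] _].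
by rewrite ltW // gamma_gt0 // (leq_trans k_ge1 k_le_l).
Qed.

End ProximalShuffling.

Local Open Scope ereal_scope.

Theorem mainTheorem11 (R : realType) (n d : nat)
    (fi : 'I_n -> vec R d -> R) (g : 'I_n -> vec R d -> vec R d)
    (psi : vec R d -> \bar R) (mu : R) (G : 'I_n -> R)
    (xstar : vec R d) (K : nat) (eta : nat -> R) (sigma : nat -> 'S_n)
    (x : nat -> vec R d) :
  (0 < n)%N ->
  (forall i, convex_fun (fi i)) ->
  (forall i y, subgrad (fi i) y (g i y)) ->
  proper_fun psi -> convex_efun psi -> closed_fun psi ->
  (forall i, 0 < G i)%R ->
  (forall i y v, subgrad (fi i) y v -> enorm v <= G i)%R ->
  mu_condition psi mu ->
  let f := fun y => (n%:R^-1 * \sum_(i < n) fi i y)%R in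
  let F := fun y => (f y)%:E + psi y in
  psi xstar \is a fin_num ->
  (forall y, F xstar <= F y) ->
  (2 <= K)%N ->
  (forall k, (1 <= k <= K)%N -> 0 < eta k)%R ->
  psi (x 1%N) \is a fin_num ->
  (forall k, (1 <= k <= K)%N ->
     forall y : vec R d,
       n%:R%:E * psi (x k.+1)
         + (sqnorm (x k.+1 - epoch_end g (sigma k) (eta k) (x k))
              / (2 * eta k))%:E
       <= n%:R%:E * psi y
         + (sqnorm (y - epoch_end g (sigma k) (eta k) (x k)) / (2 * eta k))%:E) ->
  let gamma := fun k : nat =>
    (eta k * \prod_(2 <= l < k.+1) (1 + n%:R * eta l.-1 * mu))%R in
  let Gbar := (n%:R^-1 * \sum_(i < n) G i)%R in
  F (x K.+1) <= F xstar +
    ((sqnorm (xstar - x 1%N) - sqnorm (xstar - x K.+1))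
        / (2 * n%:R * \sum_(1 <= k < K.+1) gamma k)
     + 3 * Gbar ^+ 2 * n%:R *
         \sum_(1 <= k < K.+1) (gamma k * eta k / \sum_(k <= l < K.+1) gamma l))%:E.
Proof.
move=> n_gt0 _ g_subgrad [psi_ninfty _] psi_convex _ G_gt0 g_lip psi_mu f F
  xstar_fin _ K_ge2 eta_gt0 x1_fin x_prox; cbv zeta.
set gamma := fun k => (eta k * \prod_(2 <= l < k.+1) (1 + n%:R * eta l.-1 * mu))%R.
set Gbar := (n%:R^-1 * \sum_(i < n) G i)%R.
have g_bound i y : (sqnorm (g i y) <= G i ^+ 2)%R.
  exact: sqnorm_le_sqr (g_lip i y _ (g_subgrad i y)).
have K_gt0 : (0 < K)%N := ltnW K_ge2.
have xK_fin : psi (x K.+1) \is a fin_num.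
  by apply: (iterate_fin_num n_gt0 psi_ninfty x1_fin x_prox); rewrite /= leqnn.
have := last_iterate_real_bound n_gt0 G_gt0 g_bound g_subgrad psi_ninfty psi_convex
  psi_mu xstar_fin x1_fin eta_gt0 x_prox K_gt0.
have := tail_weighted_sum_ge0 n psi_mu eta_gt0.
set S := (\sum_(1 <= k < K.+1) (gamma k * eta k / \sum_(k <= l < K.+1) gamma l))%R.
move=> S_ge0 bound.
have -> : (3 * Gbar ^+ 2 * n%:R = 3 * (\sum_i G i) ^+ 2 / n%:R)%R.
  by rewrite /Gbar; field; rewrite gt_eqF ?ltr0n.
have : (0 <= (\sum_i G i) ^+ 2 / n%:R * S)%R by rewrite mulr_ge0 ?divr_ge0 ?sqr_ge0.
rewrite /F -(fineK xK_fin) -(fineK xstar_fin) -!EFinD lee_fin /f.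
lra.
Qed.
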